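(* Let $M$ be a finite group whose order is divisible by the prime $p$. Let $y,z\in M$ and write $y=y_sy_u$, $z=z_sz_u$ as products of their commuting $p$-regular and $p$-parts. If $y_sz_u\neq z_uy_s$ and $z_sy_u\neq y_uz_s$, then $yz\neq zy$, $|\mathcal O_y^{\langle y,z\rangle}|\geq3$ and $|\mathcal O_z^{\langle y,z\rangle}|\geq3$. If in addition $y$ and $z$ are conjugate in $M$ and $\mathcal O_y^{\langle y,z\rangle}\cap\mathcal O_z^{\langle y,z\rangle}=\emptyset$, then the conjugacy class $\mathcal O_y^M$ is of type C.
   Context: $\mathcal O^H_x$ denotes the conjugacy class of $x$ in $H$. A conjugacy class $\mathcal O$ in a finite group $M$ is of type C if there exist $H\leq M$ and $r,s\in\mathcal O\cap H$ with: $rs\neq sr$; $\mathcal O_r^H\neq\mathcal O_s^H$; $H=\langle\mathcal O_r^H,\mathcal O_s^H\rangle$; and either $\min(|\mathcal O_r^H|,|\mathcal O_s^H|)>2$ or $\max(|\mathcal O_r^H|,|\mathcal O_s^H|)>4$. *)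

From mathcomp Require Import all_boot all_order all_fingroup all_solvable.
Set Implicit Arguments. Unset Strict Implicit. Unset Printing Implicit Defensive.
Local Open Scope group_scope.

Definition typeC (gT : finGroupType) (M : {group gT}) (O : {set gT}) : Prop :=
  exists (H : {group gT}) (r s : gT),
    [/\ H \subset M, r \in O :&: H, s \in O :&: H & r * s != s * r] /\
    [/\ r ^: H != s ^: H,
        H :=: <<(r ^: H) :|: (s ^: H)>> &
        (2 < minn #|r ^: H| #|s ^: H|)%N || (4 < maxn #|r ^: H| #|s ^: H|)%N].

From mathcomp Require Import all_boot all_order all_fingroup all_solvable.
Set Implicit Arguments. Unset Strict Implicit. Unset Printing Implicit Defensive.
Local Open Scope group_scope.

(* If |y^H| <= 2 for H = <y, z>, then C_H[y] has index at most 2 in H, so it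
   is normal and contains every element of H of odd order.  Index 1 is
   excluded because z does not commute with y.  For index 2, one of z_u, z_s
   has odd order (z_s if p = 2, z_u otherwise), hence commutes with y and so
   with y_s or y_u, against the hypotheses.  Since y and z play symmetric
   roles, both classes have at least 3 elements, and then r = y, s = z
   witness that y^M is of type C. *)

Section TypeC.

Variable gT : finGroupType.
Implicit Types (pi rho : nat_pred) (x y z a b g : gT) (G H C M : {group gT}).

Lemma mem_constt pi G x : x \in G -> x.`_pi \in G.
Proof. by move=> xG; apply: subsetP (cycle_constt pi x); rewrite cycle_subG. Qed.

Lemma commute_constt_r rho a b : commute a b -> commute a b.`_rho.
Proof. by move=> cab; have /cycleP[n ->] := cycle_constt rho b; apply: commuteX. Qed.

Lemma commute_constt pi rho a b : commute a b -> commute a.`_pi b.`_rho.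
Proof. by move/commute_constt_r/commute_sym/commute_constt_r/commute_sym. Qed.

Lemma odd_order_constt pi x : 2 \notin pi -> odd #[x.`_pi].
Proof.
move=> pi'2; rewrite odd_2'nat; apply: sub_in_pnat (p_elt_constt pi x).
by move=> q _ piq; apply: contraNneq pi'2 => <-.
Qed.

Lemma mem_normal_coprime_index H C g :
  C <| H -> g \in H -> coprime #|H : C| #[g] -> g \in C.
Proof.
move=> /andP[sCH nCH] gH co_g; have gN := subsetP nCH g gH.
apply: coset_idr => //; apply/eqP; rewrite -order_eq1 -dvdn1 -(eqP co_g).
rewrite dvdn_gcd morph_order // andbT -card_quotient //.
by rewrite order_dvdG // mem_quotient.
Qed.

Lemma class_gt2 H p y z :
  prime p -> z \in H ->
  y.`_p^' * z.`_p != z.`_p * y.`_p^' -> z.`_p^' * y.`_p != y.`_p * z.`_p^' ->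
  (2 < #|y ^: H|)%N.
Proof.
move=> pr_p zH ncA ncB; rewrite -index_cent1; set C := 'C_H[y].
have sCH : C \subset H := subsetIl H _.
have centC pi : z.`_pi \in C -> commute y.`_pi^' z.`_pi.
  by case/setIP=> _ /cent1P /(commute_constt_r pi^') /commute_sym.
have zpC : z.`_p \notin C by apply: contra ncA => /centC ->.
have zp'C : z.`_p^' \notin C.
  apply: contra ncB => /centC; rewrite (eq_constt _ (negnK p)) => ->.
  exact/eqP.
have [q oddq [qH qC]] : exists2 q, odd #[q] & q \in H /\ q \notin C.
  case: (eqVneq p 2) => [p2 | p_neq2]; [exists z.`_p^' | exists z.`_p];
    by [apply: odd_order_constt; rewrite !inE ?p2 ?negbK // eq_sym
       | rewrite mem_constt].
rewrite ltnNge; apply/negP => le_iC2.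
have iC : #|H : C| = 2.
  apply/eqP; rewrite eqn_leq le_iC2 ltn_neqAle indexg_gt0 andbT eq_sym.
  by apply: contraNneq zpC => /(index1g sCH); rewrite /C => ->; rewrite mem_constt.
have := mem_normal_coprime_index (index2_normal sCH iC) qH.
by rewrite iC coprime2n oddq => /(_ isT); apply/negP.
Qed.

Lemma mem_gen_set2 y z : y \in <<[set y; z]>> /\ z \in <<[set y; z]>>.
Proof. by rewrite !mem_gen // !inE eqxx ?orbT. Qed.

Lemma gen_classes_set2 y z (H := <<[set y; z]>>%G) :
  H :=: <<(y ^: H) :|: (z ^: H)>>.
Proof.
have [yH zH] := mem_gen_set2 y z.
apply/eqP; rewrite eqEsubset gen_subG subUset !class_subG // andbT.
by rewrite genS // subUset !sub1set !inE !class_refl ?orbT.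
Qed.

Lemma typeC_set2 M y z (H := <<[set y; z]>>%G) :
  y \in M -> z \in M -> y \in z ^: M -> y * z != z * y ->
  (y ^: H) :&: (z ^: H) = set0 ->
  (2 < #|y ^: H|)%N -> (2 < #|z ^: H|)%N ->
  typeC M (y ^: M).
Proof.
move=> yM zM yzM ncyz disj_yz yH3 zH3; have [yH zH] := mem_gen_set2 y z.
exists H, y, z; split; split => //.
- by rewrite gen_subG subUset !sub1set yM zM.
- by rewrite inE class_refl yH.
- by rewrite inE -class_sym yzM zH.
- apply: contra_eq_neq disj_yz => ->; rewrite setIid.
  by apply/set0Pn; exists z; apply: class_refl.
- exact: gen_classes_set2.
- by rewrite leq_min yH3 zH3.
Qed.

End TypeC.

Theorem lemma2p5 (gT : finGroupType) (M : {group gT}) (p : nat)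
  (pr_p : prime p) (p_dvd : (p %| #|M|)%N) (y z : gT)
  (yM : y \in M) (zM : z \in M)
  (h1 : y.`_p^' * z.`_p != z.`_p * y.`_p^')
  (h2 : z.`_p^' * y.`_p != y.`_p * z.`_p^') :
  (y * z != z * y /\
   (3 <= #|y ^: <<[set y; z]>>|)%N /\ (3 <= #|z ^: <<[set y; z]>>|)%N) /\
  (y \in z ^: M ->
   (y ^: <<[set y; z]>>) :&: (z ^: <<[set y; z]>>) = set0 ->
   typeC M (y ^: M)).
Proof.
have [yH zH] := mem_gen_set2 y z.
have ncyz : y * z != z * y.
  by apply: contra h1 => /eqP /(commute_constt p^' p) ->.
have yH3 := class_gt2 pr_p zH h1 h2.
have zH3 := class_gt2 pr_p yH h2 h1.
split=> [// | yzM disj_yz].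
exact: typeC_set2 yM zM yzM ncyz disj_yz yH3 zH3.
Qed.
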